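(* Assume $S\times M\neq\emptyset$, let $(x,\lambda):[t_0,+\infty[\ \to X\times Y$ be a solution of (AHT), and suppose there exists $t_+\ge t_0$ such that $\varepsilon^2(t)+\dot\varepsilon(t)\ge0$ and $2\varepsilon(t)\dot\varepsilon(t)+\ddot\varepsilon(t)\le0$ for all $t\ge t_+$. Then for every $(\bar x,\bar\lambda)\in S\times M$, as $t\to+\infty$: \[ \|(\dot x(t),\dot\lambda(t))+\varepsilon(t)((x(t),\lambda(t))-(\bar x,\bar\lambda))\|^2=\mathcal{O}\big(e^{-2\rho(t)}+\varepsilon^2(t)\big), \] \[ \varepsilon(t)\big(L(x(t),\bar\lambda)-L(\bar x,\lambda(t))\big)=\mathcal{O}\big(e^{-2\rho(t)}+\varepsilon^2(t)\big),\qquad \|T(x(t),\lambda(t))-T(\bar x,\bar\lambda)\|^2=\mathcal{O}\big(e^{-2\rho(t)}+\varepsilon^2(t)\big). \]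
   Context: $X,Y$ are real Hilbert spaces; $X\times Y$ carries the product inner product and norm $\|\cdot\|$. Standing assumptions: $f:X\to\mathbb{R}$ is convex and continuously differentiable with $\nabla f$ Lipschitz continuous on bounded subsets of $X$; $A:X\to Y$ is linear and continuous with adjoint $A^*$; $b\in Y$; $\varepsilon:[t_0,+\infty[\ \to\ ]0,+\infty[$ ($t_0\ge0$) is twice continuously differentiable with $\lim_{t\to+\infty}\varepsilon(t)=0$. $L(x,\lambda)=f(x)+\langle\lambda,Ax-b\rangle_Y$ and $T(x,\lambda)=(\nabla f(x)+A^*\lambda,\ b-Ax)$. $S$ is the set of optimal solutions of $\min\{f(x):Ax=b\}$, $M$ the set of Lagrange multipliers; $S\times M$ is the set of saddle points of $L$, equal to the zero set of $T$. $\rho(t)=\int_{t_0}^t\varepsilon(\tau)\,d\tau$. (AHT) is the system $\dot x+\nabla f(x)+A^*\lambda+\varepsilon(t)x=0$, $\dot\lambda+b-Ax+\varepsilon(t)\lambda=0$; a solution is a continuously differentiable $(x,\lambda):[t_0,+\infty[\ \to X\times Y$ satisfying it on $[t_0,+\infty[$ (existence and uniqueness for every initial datum is assumed). *)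

From HB Require Import structures.
From mathcomp Require Import all_boot all_order all_algebra.
From mathcomp Require Import all_classical all_reals all_analysis.
Set Implicit Arguments. Unset Strict Implicit. Unset Printing Implicit Defensive.
Import Order.TTheory GRing.Theory Num.Theory.
Import numFieldNormedType.Exports.
Local Open Scope classical_set_scope.
Local Open Scope ring_scope.

(* A real inner product on a normed space whose norm it induces.
   Together with completeness of the carrier this makes it a real Hilbert space. *)
Definition is_inner_product (R : realType) (X : normedModType R)
  (ip : X -> X -> R) : Prop :=
  [/\ (forall x y, ip x y = ip y x),
      (forall a x y z, ip (a *: x + y) z = a * ip x z + ip y z) &
      (forall x, ip x x = `|x| ^+ 2)].

Definition has_deriv_on (R : realType) (V : normedModType R) (t0 : R)
  (g dg : R -> V) : Prop :=
  forall t, t0 <= t ->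
    (fun s => (s - t)^-1 *: (g s - g t)) @ within (fun s => t0 <= s /\ s != t) (nbhs t)
      --> dg t.

Definition cont_on (R : realType) (V : normedModType R) (t0 : R) (g : R -> V) : Prop :=
  {within `[t0, +oo[, continuous g}.

Definition convex_fun (R : realType) (X : normedModType R) (f : X -> R) : Prop :=
  forall (x y : X) (a : R), 0 <= a <= 1 ->
    f (a *: x + (1 - a) *: y) <= a * f x + (1 - a) * f y.

Definition optsol (R : realType) (X Y : normedModType R) (f : X -> R)
  (A : X -> Y) (b : Y) : set X :=
  [set xb | A xb = b /\ forall x, A x = b -> f xb <= f x].

Definition multipliers (R : realType) (X Y : normedModType R) (f : X -> R)
  (gf : X -> X) (A : X -> Y) (As : Y -> X) (b : Y) : set Y :=
  [set lb | exists2 xb, optsol f A b xb & gf xb + As lb = 0].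

Definition lagr (R : realType) (X Y : normedModType R) (ipY : Y -> Y -> R)
  (f : X -> R) (A : X -> Y) (b : Y) (x : X) (l : Y) : R :=
  f x + ipY l (A x - b).

Definition pnorm2 (R : realType) (X Y : normedModType R) (u : X) (v : Y) : R :=
  `|u| ^+ 2 + `|v| ^+ 2.

Definition Top (R : realType) (X Y : normedModType R)
  (gf : X -> X) (A : X -> Y) (As : Y -> X) (b : Y) (x : X) (l : Y) : X * Y :=
  (gf x + As l, b - A x).

Definition bigO_pinfty (R : realType) (F G : R -> R) : Prop :=
  exists C : R, \forall t \near +oo, `|F t| <= C * `|G t|.

From HB Require Import structures.
From mathcomp Require Import all_boot all_order all_algebra.
From mathcomp Require Import all_classical all_reals all_analysis.
From mathcomp Require Import ring lra.
Set Implicit Arguments. Unset Strict Implicit. Unset Printing Implicit Defensive.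
Import Order.TTheory GRing.Theory Num.Theory.
Import numFieldNormedType.Exports.
Local Open Scope classical_set_scope.
Local Open Scope ring_scope.

(* Write z = (x, lambda), v = z' + eps z and T(x, lambda) = (grad f x + A^* lambda, b - A x).
   Then (AHT) reads v = - T(z), where T is monotone and vanishes at the saddle point zb.
   Monotonicity along the trajectory, <v s - v t, z s - z t> <= 0, makes the energy
   W = e^(2 rho) (|z'|^2 + eps' |z|^2) nonincreasing as soon as 2 eps eps' + eps'' <= 0,
   while <v, z - zb> <= 0 keeps |z - zb| bounded; with -eps' <= eps^2 this gives
   |z'|^2 = O(e^(-2 rho) + eps^2).  The three estimates follow from |T(z)| = |v|,
   T(zb) = 0 and L(x, lb) - L(xb, lambda) <= <T(z), z - zb>.  Since z' is only
   continuous and v only Lipschitz from the right, both monotonicity statements are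
   obtained from one-sided Dini derivatives. *)

(** * Dini derivatives and one-sided derivatives *)

Section RightDini.
Variable R : realType.

Lemma near_at_right_itv (P : R -> Prop) c : (\forall s \near c^'+, P s) ->
  exists2 e, 0 < e & forall s, c < s < c + e -> P s.
Proof.
rewrite /at_right /within /= => /nbhs_ballP[e /= e0 He].
exists e => // s /andP[cs se]; apply: He => //.
by rewrite /ball /= ltr_distlC; apply/andP; split; lra.
Qed.

Lemma le_at_left_cvg (g h : R -> R) a c : a < c ->
  {for c, continuous g} -> {for c, continuous h} ->
  (forall r, a <= r < c -> g r <= h r) -> g c <= h c.
Proof.
move=> ac gc hc gh.
apply: (ler_cvg_to (cvg_at_left_filter gc) (cvg_at_left_filter hc)).
near=> r; apply: gh; apply/andP; split; first by near: r; exact: nbhs_left_ge.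
by near: r; exact: nbhs_left_lt.
Unshelve. all: by end_near. Qed.

Lemma right_dini_slope_le (g : R -> R) a b d : a <= b -> 0 < d ->
  (forall s, a < s <= b -> {for s, continuous g}) ->
  (forall s, a <= s < b -> \forall s' \near s^'+, g s' <= g s + d * (s' - s)) ->
  g b <= g a + d * (b - a).
Proof.
move=> ab d0 gc gd.
pose P s := forall r, a <= r <= s -> g r <= g a + d * (r - a).
pose S := [set s | a <= s <= b /\ P s].
have Sa : S a.
  split=> [|r /andP[ar ra]]; first by rewrite lexx ab.
  have -> : r = a by apply/le_anti; rewrite ar ra.
  by rewrite subrr mulr0 addr0.
have hS : has_sup S by split; [exists a | exists b => s [/andP[]]].
pose c := sup S.
have ac : a <= c by apply: sup_upper_bound.
have cb : c <= b by apply: ge_sup; [exists a | move=> s [/andP[]]].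
have below_c r : a <= r < c -> g r <= g a + d * (r - a).
  move=> /andP[ar rc]; have cr0 : 0 < c - r by rewrite subr_gt0.
  have [s [_ Ps] ls] := sup_adherent cr0 hS.
  by apply: Ps; rewrite ar /=; rewrite -/c in ls; lra.
have Pc : P c.
  move=> r /andP[ar rc]; have [rc'|cr] := ltP r c; first by apply: below_c; rewrite ar.
  have -> : r = c by apply/le_anti; rewrite rc cr.
  have [<-|ac'] := eqVneq a c; first by rewrite subrr mulr0 addr0.
  apply: (@le_at_left_cvg g (fun r => g a + d * (r - a)) a) => //.
  - by rewrite lt_neqAle ac' ac.
  - by apply: gc; rewrite cb lt_neqAle ac' ac.
  apply: cvgD; first exact: cvg_cst.
  by apply: cvgM; [exact: cvg_cst | apply: cvgB; [exact: cvg_id | exact: cvg_cst]].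
have [cb'|bc] := ltP c b; last first.
  have -> : b = c by apply/le_anti; rewrite cb bc.
  by apply: Pc; rewrite ac lexx.
have [e e0 He] := near_at_right_itv (gd c (introT andP (conj ac cb'))).
pose s1 := Num.min b (c + e / 2).
have cs1 : c < s1 by rewrite /s1 lt_min cb' /= ltrDl divr_gt0.
suff /(sup_upper_bound hS) : S s1 by rewrite -/c => /(lt_le_trans cs1); rewrite ltxx.
split; first by rewrite (le_trans ac (ltW cs1)) /s1 ge_min lexx.
move=> r /andP[ar rs1]; have [rc|cr] := leP r c; first by apply: Pc; rewrite ar rc.
have rce : r < c + e.
  by apply: (le_lt_trans rs1); rewrite /s1 gt_min; apply/orP; right; lra.
have := He r; rewrite cr rce => /(_ isT) /le_trans; apply.
have := Pc c; rewrite ac lexx => /(_ isT).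
lra.
Unshelve. all: by end_near. Qed.

Lemma right_dini_nonincreasing (g : R -> R) a b : a <= b ->
  (forall s, a < s <= b -> {for s, continuous g}) ->
  (forall s, a <= s < b -> forall d, 0 < d ->
     \forall s' \near s^'+, g s' <= g s + d * (s' - s)) ->
  g b <= g a.
Proof.
move=> ab gc gd; have [<-|ab'] := eqVneq a b; first by [].
have ba0 : 0 < b - a by rewrite subr_gt0 lt_neqAle ab' ab.
apply/ler_addgt0Pr => e e0.
have := right_dini_slope_le ab (divr_gt0 e0 ba0) gc (fun s hs => gd s hs _ (divr_gt0 e0 ba0)).
by rewrite divfK // gt_eqF.
Qed.

End RightDini.

Section RightDerivative.
Context {R : realType}.

Definition is_right_derive {V : normedModType R} (t : R) (g : R -> V) (dg : V) :=
  (fun s => (s - t)^-1 *: (g s - g t)) @ t^'+ --> dg.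

Lemma has_deriv_on_right (V : normedModType R) t0 (g dg : R -> V) t :
  has_deriv_on t0 g dg -> t0 <= t -> is_right_derive t g (dg t).
Proof.
move=> gd t0t; apply: cvg_trans (gd t t0t); apply: cvg_app.
by apply: within_subset => s /= ts; rewrite gt_eqF // (le_trans t0t (ltW ts)).
Qed.

Lemma is_right_derive_cvg (V : normedModType R) t (g : R -> V) dg :
  is_right_derive t g dg -> g @ t^'+ --> g t.
Proof.
move=> gd.
have e : {near t^'+, (fun s => g t + (s - t) *: ((s - t)^-1 *: (g s - g t))) =1 g}.
  near=> s; rewrite scalerA mulfV; first by rewrite scale1r addrC subrK.
  by rewrite subr_eq0 gt_eqF //; near: s; exact: nbhs_right_gt.
suff : (fun s => g t + (s - t) *: ((s - t)^-1 *: (g s - g t))) @ t^'+ --> g t + 0 *: dg.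
  by rewrite scale0r addr0 => h; exact: cvg_trans (near_eq_cvg e) h.
apply: cvgD; first exact: cvg_cst.
apply: cvgZ gd; rewrite -(subrr t); apply: cvgB; last exact: cvg_cst.
exact: cvg_at_right_filter cvg_id.
Unshelve. all: by end_near. Qed.

Lemma is_right_derive_cst (V : normedModType R) t (c : V) :
  is_right_derive t (fun _ => c) 0.
Proof.
rewrite /is_right_derive (_ : (fun s => _) = fun _ => 0); first exact: cvg_cst.
by apply/funext => s; rewrite subrr scaler0.
Qed.

Lemma is_right_deriveD (V : normedModType R) t (f g : R -> V) df dg :
  is_right_derive t f df -> is_right_derive t g dg ->
  is_right_derive t (fun s => f s + g s) (df + dg).
Proof.
move=> fd gd; rewrite /is_right_derive.
under eq_fun do rewrite opprD addrACA scalerDr.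
exact: cvgD.
Qed.

Lemma is_right_deriveZ (V : normedModType R) t (f : R -> R) (g : R -> V) df dg :
  is_right_derive t f df -> is_right_derive t g dg ->
  is_right_derive t (fun s => f s *: g s) (df *: g t + f t *: dg).
Proof.
move=> fd gd; rewrite /is_right_derive.
have e s : (s - t)^-1 *: (f s *: g s - f t *: g t) =
    ((s - t)^-1 * (f s - f t)) *: g s + f t *: ((s - t)^-1 *: (g s - g t)).
  by rewrite !scalerBr !scalerA mulrBr scalerBl [f t / _]mulrC addrA subrK.
under eq_fun do rewrite e.
by apply: cvgD; apply: cvgZ => //; [exact: is_right_derive_cvg gd | exact: cvg_cst].
Qed.

Lemma is_right_deriveM t (f g : R -> R) df dg :
  is_right_derive t f df -> is_right_derive t g dg ->
  is_right_derive t (fun s => f s * g s) (df * g t + f t * dg).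
Proof. exact: (@is_right_deriveZ R^o). Qed.

Lemma is_derive_right (V : normedModType R) t (f : R -> V) df :
  is_derive t (1 : R) f df -> is_right_derive t f df.
Proof.
case=> /cvg_ex[l fl] <-; rewrite /derive (cvg_lim _ fl) //.
apply/cvgrPdist_lt => e e0; move/cvgrPdist_lt: fl => /(_ e e0).
rewrite /dnbhs /within /at_right /= => /nbhs_ballP[d /= d0 fd].
apply/nbhs_ballP; exists d => // s /= ts st; have := fd (s - t).
rewrite -[(s - t)%:A]/((s - t) * 1) mulr1 subrK; apply; last by rewrite subr_eq0 gt_eqF.
by rewrite /ball /= sub0r normrN distrC.
Qed.

Lemma is_right_derive_lipschitz (V : normedModType R) t (g : R -> V) dg :
  is_right_derive t g dg ->
  \forall s \near t^'+, `|g s - g t| <= (`|dg| + 1) * (s - t).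
Proof.
move=> /cvgrPdist_le /(_ 1 ltr01) gd; near=> s.
have ts : t < s by near: s; exact: nbhs_right_gt.
have qd : `|dg - (s - t)^-1 *: (g s - g t)| <= 1 by near: s; exact: gd.
set q := (s - t)^-1 *: _ in qd.
have -> : g s - g t = (s - t) *: q by rewrite scalerA mulfV ?scale1r // subr_eq0 gt_eqF.
rewrite normrZ gtr0_norm ?subr_gt0 // mulrC.
apply: ler_wpM2r; first by rewrite subr_ge0 ltW.
have := ler_normB dg (dg - q); rewrite opprB addrC subrK.
lra.
Unshelve. all: by end_near. Qed.

Lemma has_deriv_on_cont (V : normedModType R) t0 (g dg : R -> V) :
  has_deriv_on t0 g dg -> cont_on t0 g.
Proof.
move=> gd.
have lim t : t0 <= t -> g @ within (fun s => t0 <= s /\ s != t) (nbhs t) --> g t.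
  move=> t0t.
  have e : {near within (fun s => t0 <= s /\ s != t) (nbhs t),
      (fun s => g t + (s - t) *: ((s - t)^-1 *: (g s - g t))) =1 g}.
    rewrite /prop_near1 /= /within /=; apply: nearW => s [_ st].
    by rewrite scalerA mulfV ?subr_eq0 // scale1r addrC subrK.
  suff : (fun s => g t + (s - t) *: ((s - t)^-1 *: (g s - g t))) @
      within (fun s => t0 <= s /\ s != t) (nbhs t) --> g t + 0 *: dg t.
    by rewrite scale0r addr0 => h; exact: cvg_trans (near_eq_cvg e) h.
  apply: cvgD; first exact: cvg_cst.
  apply: cvgZ (gd t t0t); rewrite -(subrr t); apply: cvgB; last exact: cvg_cst.
  exact: cvg_within_filter cvg_id.
apply/continuous_within_itvcyP; split.
  move=> t; rewrite in_itv /= andbT => t0t.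
  apply/continuous_withinNx/cvgrPdist_lt => e e0.
  move/cvgrPdist_lt: (lim t (ltW t0t)) => /(_ e e0); rewrite !near_withinE.
  apply: filterS2 (@cvgr_gt _ _ (nbhs t) _ id t cvg_id t0 t0t) => s t0s gs st.
  by apply: gs; split => //; exact: ltW.
apply: cvg_trans (lim t0 (lexx _)); apply: cvg_app; apply: within_subset => s /= t0s.
by rewrite ltW // gt_eqF.
Qed.

Lemma cont_on_at (V : normedModType R) t0 (g : R -> V) t :
  cont_on t0 g -> t0 < t -> {for t, continuous g}.
Proof.
by move=> /continuous_within_itvcyP[gc _] t0t; apply: gc; rewrite in_itv /= andbT.
Qed.

Lemma cont_on_right (V : normedModType R) t0 (g : R -> V) t :
  cont_on t0 g -> t0 <= t -> g @ t^'+ --> g t.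
Proof.
move=> gc; rewrite le_eqVlt => /orP[/eqP <-|t0t].
  by case/continuous_within_itvcyP: gc.
exact/cvg_at_right_filter/(cont_on_at gc t0t).
Qed.

End RightDerivative.

Lemma norm_le_cvg0 (R : realType) T (F : set_system T) (FF : Filter F) (h m : T -> R) :
  (\forall x \near F, `|h x| <= m x) -> m @ F --> 0 -> h @ F --> 0.
Proof.
move=> hm /cvgr0Pnorm_le m0; apply/cvgr0Pnorm_le => e e0.
apply: filterS2 hm (m0 e e0) => x hx mx.
by rewrite (le_trans hx) // (le_trans (ler_norm _)).
Qed.

Lemma le_max_of_right_deriv (R : realType) (q dq : R -> R) c t0 t : t0 <= t ->
  (forall s, t0 < s -> {for s, continuous q}) ->
  (forall s, t0 <= s -> is_right_derive s q (dq s)) ->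
  (forall s, t0 <= s -> c <= q s -> dq s <= 0) ->
  q t <= Num.max (q t0) c.
Proof.
move=> t0t qc qd dq_le; pose h s := Num.max (q s) c.
suff : h t <= h t0 by apply: le_trans; rewrite le_max lexx.
apply: right_dini_nonincreasing => // [s /andP[t0s _]|s /andP[t0s _] d d0].
  by apply: continuous_max; [exact: qc | exact: cvg_cst].
have [qsc|cqs] := ltP (q s) c.
  have qs'c := cvgr_lt _ (is_right_derive_cvg (qd s t0s)) c qsc.
  near=> s'; have ss' : s < s' by near: s'; exact: nbhs_right_gt.
  have : q s' < c by near: s'; exact: qs'c.
  rewrite /h (max_r (ltW qsc)) => /ltW /max_r ->.
  have ds : 0 < d * (s' - s) by rewrite mulr_gt0 // subr_gt0.
  lra.
have quot := cvgr_lt _ (qd s t0s) d (le_lt_trans (dq_le s t0s cqs) d0).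
near=> s'; have ss' : s < s' by near: s'; exact: nbhs_right_gt.
have : (s' - s)^-1 *: (q s' - q s) < d by near: s'; exact: quot.
rewrite -[_ *: _]/(_ * _) mulrC ltr_pdivrMr ?subr_gt0 // => qs'.
have ds : 0 < d * (s' - s) by rewrite mulr_gt0 // subr_gt0.
by rewrite /h (max_l cqs) ge_max; apply/andP; split; lra.
Unshelve. all: by end_near. Qed.

(** * Symmetric bilinear forms *)

Section SymmetricBilinearForm.
Variables (R : realType) (V : normedModType R) (ip : V -> V -> R).
Hypothesis ipC : forall u v, ip u v = ip v u.
Hypothesis ip_linear : forall k u v w, ip (k *: u + v) w = k * ip u w + ip v w.

Lemma ipDl u v w : ip (u + v) w = ip u w + ip v w.
Proof. by rewrite -[u in LHS]scale1r ip_linear mul1r. Qed.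

Lemma ip0l w : ip 0 w = 0.
Proof. by have := ipDl 0 0 w; rewrite addr0; lra. Qed.

Lemma ipZl k u w : ip (k *: u) w = k * ip u w.
Proof. by rewrite -[k *: u]addr0 ip_linear ip0l addr0. Qed.

Lemma ipNl u w : ip (- u) w = - ip u w.
Proof. by rewrite -scaleN1r ipZl mulN1r. Qed.

Lemma ipBl u v w : ip (u - v) w = ip u w - ip v w.
Proof. by rewrite ipDl ipNl. Qed.

Lemma ipDr u v w : ip w (u + v) = ip w u + ip w v.
Proof. by rewrite ipC ipDl ![ip _ w]ipC. Qed.

Lemma ipZr k u w : ip w (k *: u) = k * ip w u.
Proof. by rewrite ipC ipZl ipC. Qed.

Lemma ipNr u w : ip w (- u) = - ip w u.
Proof. by rewrite ipC ipNl ipC. Qed.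

Lemma ipBr u v w : ip w (u - v) = ip w u - ip w v.
Proof. by rewrite ipDr ipNr. Qed.

Lemma ip0r w : ip w 0 = 0.
Proof. by rewrite ipC ip0l. Qed.

Lemma ip_addZ_self u v k :
  ip (u + k *: v) (u + k *: v) = ip u u + 2 * k * ip u v + k ^+ 2 * ip v v.
Proof. by rewrite ipDl !ipDr !ipZl !ipZr (ipC v u); ring. Qed.

(* The form need not induce the norm: on [X * Y] the norm is the max norm. *)
Variable K : R.
Hypothesis ip_bounded : forall u v, `|ip u v| <= K * (`|u| * `|v|).

Lemma cvg_ip T (F : set_system T) (FF : Filter F) (f g : T -> V) u v :
  f @ F --> u -> g @ F --> v -> (fun x => ip (f x) (g x)) @ F --> ip u v.
Proof.
move=> fu gv.
have dist0 (h : T -> V) w : h @ F --> w -> (fun x => `|h x - w|) @ F --> 0.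
  move=> hw; rewrite -(@normr0 _ V); apply: cvg_norm.
  by rewrite -(subrr w); apply: cvgB => //; exact: cvg_cst.
have -> : (fun x => ip (f x) (g x)) =
    (fun x => ip u v + (ip (f x - u) (g x) + ip u (g x - v))).
  by apply/funext => x; rewrite ipBl ipBr; ring.
rewrite -[X in _ --> X]addr0; apply: cvgD; first exact: cvg_cst.
apply: (@norm_le_cvg0 _ _ _ _ _
  (fun x => K * (`|f x - u| * `|g x|) + K * (`|u| * `|g x - v|))).
  by apply: nearW => x; rewrite (le_trans (ler_normD _ _)) // lerD.
suff : (fun x => K * (`|f x - u| * `|g x|) + K * (`|u| * `|g x - v|)) @ F -->
    K * (0 * `|v|) + K * (`|u| * 0) by rewrite mul0r !mulr0 addr0.
apply: cvgD; apply: cvgM; try exact: cvg_cst; apply: cvgM.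
- exact: dist0.
- exact: cvg_norm.
- exact: cvg_cst.
- exact: dist0.
Qed.

Lemma is_right_derive_ip t (f g : R -> V) df dg :
  is_right_derive t f df -> is_right_derive t g dg ->
  is_right_derive t (fun s => ip (f s) (g s)) (ip df (g t) + ip (f t) dg).
Proof.
move=> fd gd; rewrite /is_right_derive.
have -> : (fun s => (s - t)^-1 *: (ip (f s) (g s) - ip (f t) (g t))) =
    (fun s => ip ((s - t)^-1 *: (f s - f t)) (g s) + ip (f t) ((s - t)^-1 *: (g s - g t))).
  by apply/funext => s; rewrite ipZl ipZr ipBl ipBr -[_ *: _]/(_ * _); ring.
apply: cvgD; apply: cvg_ip => //; [exact: is_right_derive_cvg gd | exact: cvg_cst].
Qed.

Hypothesis ip_ge0 : forall u, 0 <= ip u u.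

Lemma ip_self_sub_le u v : ip u u - ip v v <= 2 * ip (u - v) u.
Proof. by have := ip_ge0 (u - v); rewrite !ipBl !ipBr (ipC v u); lra. Qed.

Lemma ip_self_add_le u v : ip (u + v) (u + v) <= 2 * ip u u + 2 * ip v v.
Proof. by have := ip_ge0 (u - v); rewrite !ipBl !ipBr ipDl !ipDr (ipC v u); lra. Qed.

Lemma ip_ge0_of_le u v : ip v v <= ip (u - v) (u - v) -> 0 <= ip u (u - v).
Proof.
move=> vw; have := ip_ge0 u.
have -> : ip u u = ip (u - v) (u - v) + 2 * ip v (u - v) + ip v v.
  have {1 2}-> : u = (u - v) + v by rewrite subrK.
  by rewrite (ipDl (u - v)) !(ipDr (u - v) v) (ipC (u - v) v); ring.
have -> : ip u (u - v) = ip (u - v) (u - v) + ip v (u - v) by rewrite -ipDl subrK.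
lra.
Qed.

Section Energy.
Variables (t0 t1 : R) (eps eps1 eps2 a : R -> R) (z dz : R -> V).
Hypothesis t0_lt_t1 : t0 < t1.
Hypothesis z_deriv : has_deriv_on t0 z dz.
Hypothesis dz_cont : cont_on t0 dz.
Hypothesis eps_deriv : has_deriv_on t0 eps eps1.
Hypothesis eps1_deriv : has_deriv_on t0 eps1 eps2.
Hypothesis a_deriv : forall t, t1 <= t -> is_derive t (1 : R) a (2 * eps t * a t).
Hypothesis a_ge0 : forall t, 0 <= a t.
Hypothesis eps_cond : forall t, t1 <= t -> 2 * eps t * eps1 t + eps2 t <= 0.

Let v t := dz t + eps t *: z t.
Hypothesis v_monotone : forall s t, t0 <= s -> t0 <= t -> ip (v s - v t) (z s - z t) <= 0.
Hypothesis v_right_lipschitz : forall t, t0 <= t ->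
  exists L, \forall s \near t^'+, `|v s - v t| <= L * (s - t).

Let W t := a t * (ip (dz t) (dz t) + eps1 t * ip (z t) (z t)).

(* An upper bound for the difference quotient of W: monotonicity of v discards the
   term <v s' - v s, z s' - z s> / (s' - s)^2, which need not converge. *)
Let dW s s' := (s' - s)^-1 * (a s' - a s) * ip (dz s') (dz s')
  + 2 * a s * ip ((s' - s)^-1 *: (v s' - v s)) (dz s' - (s' - s)^-1 *: (z s' - z s))
  - 2 * a s * ip ((s' - s)^-1 *: (eps s' *: z s' - eps s *: z s)) (dz s')
  + (s' - s)^-1 * (a s' * eps1 s' * ip (z s') (z s') - a s * eps1 s * ip (z s) (z s)).

Lemma energy_increment_le s : t0 <= s ->
  \forall s' \near s^'+, W s' - W s <= (s' - s) * dW s s'.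
Proof.
move=> t0s; near=> s'.
have ss' : s < s' by near: s'; exact: nbhs_right_gt.
have h0 : s' - s != 0 by rewrite subr_eq0 gt_eqF.
have mono := v_monotone (le_trans t0s (ltW ss')) t0s.
have -> : (s' - s) * dW s s' = (a s' - a s) * ip (dz s') (dz s')
    + 2 * a s * ip (dz s' - dz s) (dz s')
    - 2 * a s * (s' - s)^-1 * ip (v s' - v s) (z s' - z s)
    + (a s' * eps1 s' * ip (z s') (z s') - a s * eps1 s * ip (z s) (z s)).
  have -> : dz s' - dz s = (v s' - v s) - (eps s' *: z s' - eps s *: z s).
    by rewrite /v opprD addrACA addrK.
  by rewrite /dW !ipZl ipBr ipZr !ipBl; field.
have := ip_self_sub_le (dz s') (dz s).
have : 0 <= a s * (s' - s)^-1 * - ip (v s' - v s) (z s' - z s).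
  by rewrite mulr_ge0 ?oppr_ge0 // mulr_ge0 // invr_ge0 subr_ge0 ltW.
have := a_ge0 s; rewrite /W; nra.
Unshelve. all: by end_near. Qed.

Lemma energy_cross_term_cvg0 s : t0 <= s ->
  ip ((s' - s)^-1 *: (v s' - v s)) (dz s' - (s' - s)^-1 *: (z s' - z s))
    @[s' --> s^'+] --> 0.
Proof.
move=> t0s; have [L vL] := v_right_lipschitz t0s.
apply: (@norm_le_cvg0 _ _ _ _ _
  (fun s' => `|K| * (`|L| * `|dz s' - (s' - s)^-1 *: (z s' - z s)|))).
  near=> s'; have ss' : s < s' by near: s'; exact: nbhs_right_gt.
  rewrite (le_trans (ip_bounded _ _)) // (le_trans (ler_norm _)) // !normrM !normr_id.
  apply: ler_wpM2l => //; apply: ler_wpM2r => //.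
  rewrite normrZ gtr0_norm ?invr_gt0 ?subr_gt0 // mulrC ler_pdivrMr ?subr_gt0 //.
  rewrite (le_trans (near vL s' _)) //; apply: ler_wpM2r; first by rewrite subr_ge0 ltW.
  by rewrite real_ler_norm // num_real.
rewrite -(mulr0 `|K|) -(mulr0 `|L|); apply: cvgM; first exact: cvg_cst.
apply: cvgM; first exact: cvg_cst.
rewrite -(@normr0 _ V); apply: cvg_norm; rewrite -(subrr (dz s)); apply: cvgB.
  exact: cont_on_right dz_cont t0s.
exact: has_deriv_on_right z_deriv t0s.
Unshelve. all: by end_near. Qed.

Lemma energy_bound_cvg s : t1 <= s ->
  dW s s' @[s' --> s^'+] --> a s * ((2 * eps s * eps1 s + eps2 s) * ip (z s) (z s)).
Proof.
move=> t1s; have t0s : t0 <= s by rewrite ltW // (lt_le_trans t0_lt_t1).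
have ad := is_derive_right (a_deriv t1s).
have zd := has_deriv_on_right z_deriv t0s.
have ed := has_deriv_on_right eps_deriv t0s.
have e1d := has_deriv_on_right eps1_deriv t0s.
have dzc := cont_on_right dz_cont t0s.
have da : (fun s' => (s' - s)^-1 * (a s' - a s) * ip (dz s') (dz s')) @ s^'+ -->
    2 * eps s * a s * ip (dz s) (dz s) by apply: cvgM => //; exact: cvg_ip.
have deps_z : (fun s' => ip ((s' - s)^-1 *: (eps s' *: z s' - eps s *: z s)) (dz s')) @ s^'+ -->
    ip (eps1 s *: z s + eps s *: dz s) (dz s) by apply: cvg_ip => //; exact: is_right_deriveZ.
have d_aeps1z := is_right_deriveM (is_right_deriveM ad e1d) (is_right_derive_ip zd zd).
have -> : a s * ((2 * eps s * eps1 s + eps2 s) * ip (z s) (z s)) =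
    2 * eps s * a s * ip (dz s) (dz s) + 2 * a s * 0
    - 2 * a s * ip (eps1 s *: z s + eps s *: dz s) (dz s)
    + ((2 * eps s * a s * eps1 s + a s * eps2 s) * ip (z s) (z s)
      + a s * eps1 s * (ip (dz s) (z s) + ip (z s) (dz s))).
  by rewrite ipDl !ipZl (ipC (z s) (dz s)); ring.
exact: cvgD (cvgB (cvgD da (cvgM (cvg_cst (2 * a s)) (energy_cross_term_cvg0 t0s)))
  (cvgM (cvg_cst (2 * a s)) deps_z)) d_aeps1z.
Qed.

Lemma energy_nonincreasing t : t1 <= t -> W t <= W t1.
Proof.
move=> t1t; apply: right_dini_nonincreasing => // [s /andP[t1s _]|s /andP[t1s _] d d0].
  have t0s : t0 < s := lt_trans t0_lt_t1 t1s.
  have ac : {for s, continuous a}.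
    by apply/differentiable_continuous/derivable1_diffP; case: (a_deriv (ltW t1s)).
  have zc := cont_on_at (has_deriv_on_cont z_deriv) t0s.
  have e1c := cont_on_at (has_deriv_on_cont eps1_deriv) t0s.
  have dzc := cont_on_at dz_cont t0s.
  by apply: cvgM => //; apply: cvgD; [exact: cvg_ip | apply: cvgM => //; exact: cvg_ip].
have t0s : t0 <= s by rewrite ltW // (lt_le_trans t0_lt_t1).
have lim_lt_d : a s * ((2 * eps s * eps1 s + eps2 s) * ip (z s) (z s)) < d.
  by apply: le_lt_trans d0; rewrite mulr_ge0_le0 // mulr_le0_ge0 // eps_cond.
have dWd := cvgr_lt _ (energy_bound_cvg t1s) d lim_lt_d.
have inc := energy_increment_le t0s.
near=> s'; have ss' : s < s' by near: s'; exact: nbhs_right_gt.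
have : W s' - W s <= (s' - s) * dW s s' by near: s'; exact: inc.
have : dW s s' < d by near: s'; exact: dWd.
have : 0 < s' - s by rewrite subr_gt0.
nra.
Unshelve. all: by end_near. Qed.

End Energy.

Section DistanceBound.
Variables (t0 : R) (eps : R -> R) (z dz : R -> V) (zb : V).
Hypothesis z_deriv : has_deriv_on t0 z dz.
Hypothesis eps_pos : forall t, t0 <= t -> 0 < eps t.
Hypothesis descent : forall t, t0 <= t -> ip (dz t + eps t *: z t) (z t - zb) <= 0.

Lemma dist_bounded t : t0 <= t ->
  ip (z t - zb) (z t - zb) <= Num.max (ip (z t0 - zb) (z t0 - zb)) (ip zb zb).
Proof.
move=> t0t; apply: (@le_max_of_right_deriv _ (fun s => ip (z s - zb) (z s - zb))
  (fun s => ip (dz s) (z s - zb) + ip (z s - zb) (dz s))) => // [s t0s|s t0s|s t0s zbq].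
- have zc := cont_on_at (has_deriv_on_cont z_deriv) t0s.
  by apply: cvg_ip; apply: cvgB => //; exact: cvg_cst.
- have := is_right_deriveD (has_deriv_on_right z_deriv t0s) (is_right_derive_cst s (- zb)).
  by rewrite addr0 => zbd; exact: (is_right_derive_ip zbd zbd).
- have := descent t0s; rewrite ipDl ipZl (ipC (z s - zb)).
  by have := ip_ge0_of_le zbq; have := eps_pos t0s; nra.
Qed.

End DistanceBound.

End SymmetricBilinearForm.

Lemma bigO_pinfty_le (R : realType) (F G : R -> R) c t1 :
  (forall t, t1 <= t -> 0 <= G t) -> (forall t, t1 <= t -> `|F t| <= c * G t) ->
  bigO_pinfty F G.
Proof.
move=> G0 FG; exists c; near=> t.
have t1t : t1 <= t by near: t; apply: nbhs_pinfty_ge; rewrite num_real.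
by rewrite (ger0_norm (G0 t t1t)) FG.
Unshelve. all: by end_near. Qed.

Lemma is_derive_integral (R : realType) (e : R -> R) t0 t : cont_on t0 e -> t0 < t ->
  is_derive t (1 : R) (fun u => \int[lebesgue_measure]_(s in `[t0, u]) e s) (e t).
Proof.
move=> ec t0t; have tt1 : t < t + 1 by rewrite ltrDl.
have ec1 : {within `[t0, t + 1], continuous e}.
  by apply: continuous_subspaceW ec => s /=; rewrite !in_itv /= => /andP[->].
have seg : compact `[t0, t + 1]%classic by exact: segment_compact.
have e_int := continuous_compact_integrable seg ec1.
have [F_der <-] := continuous_FTC1_closed tt1 e_int t0t (cont_on_at ec t0t).
by rewrite derive1E; exact: derivableP F_der.
Qed.

Lemma ip_norm_le (R : realType) (V : normedModType R) (ip : V -> V -> R) :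
  is_inner_product ip -> forall u v, `|ip u v| <= `|u| * `|v|.
Proof.
case=> ipC ip_linear ip_norm u v.
have polar u' v' : 2 * ip u' v' <= `|u'| ^+ 2 + `|v'| ^+ 2.
  have := ip_norm (u' - v'); rewrite !(ipBl ip_linear) !(ipBr ipC ip_linear) (ipC v').
  by rewrite !ip_norm; have := sqr_ge0 `|u' - v'|; lra.
have [->|u0] := eqVneq u 0; first by rewrite (ip0l ip_linear) !normr0 mul0r.
have [->|v0] := eqVneq v 0; first by rewrite (ip0r ipC ip_linear) !normr0 mulr0.
have uv0 : 0 < `|u| * `|v| by rewrite mulr_gt0 // normr_gt0.
have := polar (`|v| *: u) (`|u| *: v); have := polar (`|v| *: u) (- (`|u| *: v)).
rewrite (ipNr ipC ip_linear) normrN !(ipZl ip_linear) !(ipZr ipC ip_linear).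
rewrite !normrZ !normr_id ler_norml => h1 h2; apply/andP; split; nra.
Qed.

Definition ip_pair (R : realType) (X Y : normedModType R)
  (ipX : X -> X -> R) (ipY : Y -> Y -> R) (p q : X * Y) : R :=
  ipX p.1 q.1 + ipY p.2 q.2.

Section PairInnerProduct.
Variables (R : realType) (X Y : normedModType R).
Variables (ipX : X -> X -> R) (ipY : Y -> Y -> R).
Hypotheses (ipXV : is_inner_product ipX) (ipYV : is_inner_product ipY).
Local Notation ip2 := (ip_pair ipX ipY).

Lemma ip_pairC p q : ip2 p q = ip2 q p.
Proof. by case: ipXV ipYV => ipXC _ _ [ipYC _ _]; rewrite /ip_pair ipXC ipYC. Qed.

Lemma ip_pair_linear k p q r : ip2 (k *: p + q) r = k * ip2 p r + ip2 q r.
Proof. by case: ipXV ipYV => _ ipXl _ [_ ipYl _]; rewrite /ip_pair ipXl ipYl; ring. Qed.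

Lemma ip_pair_self p : ip2 p p = pnorm2 p.1 p.2.
Proof. by case: ipXV ipYV => _ _ ipXn [_ _ ipYn]; rewrite /ip_pair ipXn ipYn. Qed.

Lemma ip_pair_ge0 p : 0 <= ip2 p p.
Proof. by rewrite ip_pair_self addr_ge0 // sqr_ge0. Qed.

Lemma ip_pair_bounded p q : `|ip2 p q| <= 2 * (`|p| * `|q|).
Proof.
rewrite /ip_pair (le_trans (ler_normD _ _)) // mulr2n mulrDl mul1r.
have n1 (w : X * Y) : `|w.1| <= `|w| by rewrite prod_normE le_max lexx.
have n2 (w : X * Y) : `|w.2| <= `|w| by rewrite prod_normE le_max lexx orbT.
apply: lerD; apply: le_trans (ip_norm_le _ _ _) _ => //;
  by apply: ler_pM; rewrite ?normr_ge0.
Qed.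

End PairInnerProduct.

(** * The saddle-point operator *)

Section SaddleOperator.
Variables (R : realType) (X Y : normedModType R).
Variables (ipX : X -> X -> R) (ipY : Y -> Y -> R).
Hypotheses (ipXV : is_inner_product ipX) (ipYV : is_inner_product ipY).
Variables (f : X -> R) (gf : X -> X).
Hypothesis f_convex : convex_fun f.
Hypothesis f_grad : forall x, differentiable f x /\ forall h, 'd f x h = ipX (gf x) h.
Variables (A : {linear X -> Y}) (As : Y -> X) (b : Y).
Hypothesis A_adjoint : forall x y, ipY (A x) y = ipX x (As y).
Local Notation T p := (Top gf A As b p.1 p.2).
Local Notation ip2 := (ip_pair ipX ipY).
Local Notation L := (lagr ipY f A b).

Lemma grad_dir_cvg x h : (fun t => t^-1 * (f (t *: h + x) - f x)) @ 0^'+ --> ipX (gf x) h.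
Proof.
have [fx <-] := f_grad x.
have /cvg_ex[l fl] := diff_derivable (v := h) fx.
rewrite -deriveE // /derive (cvg_lim _ fl) //.
by apply: cvg_trans fl; apply: cvg_app; apply: within_subset => t /= t0; rewrite gt_eqF.
Qed.

Lemma convex_grad_le x y : f x + ipX (gf x) (y - x) <= f y.
Proof.
suff : ipX (gf x) (y - x) <= f y - f x by lra.
apply: (ler_cvg_to (@grad_dir_cvg x (y - x)) (cvg_cst (f y - f x))); near=> t.
have t0 : 0 < t by near: t; exact: nbhs_right_gt.
have t1 : t <= 1 by near: t; apply: nbhs_right_le; exact: ltr01.
have -> : t *: (y - x) + x = t *: y + (1 - t) *: x.
  by rewrite scalerBr scalerBl scale1r addrA addrAC.
rewrite mulrC ler_pdivrMr //.
by have := f_convex y x (introT andP (conj (ltW t0) t1)); nra.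
Unshelve. all: by end_near. Qed.

Lemma grad_monotone x y : 0 <= ipX (gf x - gf y) (x - y).
Proof.
case: ipXV => ipXC ipXl _; rewrite (ipBl ipXl).
have := @convex_grad_le x y; have := @convex_grad_le y x.
by rewrite -[y - x]opprB (ipNr ipXC ipXl); lra.
Qed.

Lemma Top_monotone p q : 0 <= ip2 (T p - T q) (p - q).
Proof.
case: ipXV ipYV => ipXC ipXl _ [ipYC ipYl _].
case: p q => [x l] [y m]; rewrite /ip_pair /= !(ipBl ipXl) !(ipDl ipXl) !(ipBl ipYl).
have adj w : ipX (As w) (x - y) = ipY (A x) w - ipY (A y) w.
  by rewrite ipXC -A_adjoint linearB (ipBl ipYl).
rewrite !adj !(ipBr ipYC ipYl).
by have := grad_monotone x y; rewrite (ipBl ipXl); lra.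
Qed.

Section Saddle.
Variables (xb : X) (lb : Y).
Hypotheses (xb_opt : optsol f A b xb) (lb_mult : multipliers f gf A As b lb).

Lemma lagr_gap_ge0 x l : 0 <= L x lb - L xb l.
Proof.
case: ipXV ipYV => ipXC ipXl _ [ipYC ipYl _].
have [Axb xb_min] := xb_opt; have [x' [Ax' x'_min] gx'] := lb_mult.
have fx' : f xb = f x' by apply/le_anti; rewrite xb_min // x'_min.
have := @convex_grad_le x' x.
have -> : gf x' = - As lb by apply/eqP; rewrite -addr_eq0 gx'.
rewrite (ipNl ipXl) ipXC -A_adjoint linearB /= Ax' ipYC.
by rewrite /lagr Axb subrr (ip0r ipYC ipYl) addr0; lra.
Qed.

Lemma Top_saddle : T (xb, lb) = 0.
Proof.
case: ipXV ipYV => ipXC ipXl ipXn [ipYC ipYl _].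
have [Axb _] := xb_opt; rewrite /Top /= Axb subrr; congr (_, _).
set w := gf xb + As lb.
suff : ipX w w <= 0.
  rewrite ipXn => w2; apply/eqP; rewrite -normr_eq0 -sqrf_eq0 eq_le w2.
  by rewrite sqr_ge0.
set mw := - w.
have gap_lim : - ipX mw (As lb) <= ipX (gf xb) mw.
  apply: (ler_cvg_to (cvg_cst _) (@grad_dir_cvg xb mw)); near=> t.
  have t0 : 0 < t by near: t; exact: nbhs_right_gt.
  have := lagr_gap_ge0 (t *: mw + xb) lb.
  rewrite /lagr linearD linearZ /= Axb addrK ipYC (ipZl ipYl) A_adjoint subrr.
  rewrite (ip0r ipYC ipYl) addr0 => gap.
  by rewrite mulrC ler_pdivlMr //; nra.
rewrite /mw (ipNr ipXC ipXl) (ipNl ipXl) opprK in gap_lim.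
by rewrite {1}/w (ipDl ipXl) (ipXC (As lb)); lra.
Unshelve. all: by end_near. Qed.

Lemma lagr_gap_le_ip_Top p : L p.1 lb - L xb p.2 <= ip2 (T p) (p - (xb, lb)).
Proof.
case: ipXV ipYV => ipXC ipXl _ [ipYC ipYl _].
have [Axb _] := xb_opt; case: p => x l.
rewrite /lagr /ip_pair /= Axb subrr (ip0r ipYC ipYl) addr0 (ipDl ipXl).
rewrite (ipXC (As l)) -A_adjoint linearB /= Axb.
have -> : b - A x = - (A x - b) by rewrite opprB.
rewrite (ipNl ipYl) (ipBr ipYC ipYl l lb) (ipYC lb).
by have := @convex_grad_le x xb; rewrite -[xb - x]opprB (ipNr ipXC ipXl); lra.
Qed.

End Saddle.

Hypothesis A_cont : continuous A.
Hypothesis gf_lipschitz : forall r, exists Lc, forall x y : X,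
  `|x| <= r -> `|y| <= r -> `|gf x - gf y| <= Lc * `|x - y|.

Lemma A_bounded : exists k, 0 <= k /\ forall x, `|A x| <= k * `|x|.
Proof.
have /linear_boundedP[M [_ HM]] := @continuous_linear_bounded _ _ _ (0 : X) A (@A_cont 0).
exists (`|M| + 1); split; first by rewrite addr_ge0.
by apply: HM; have := real_ler_norm (num_real M); lra.
Qed.

Lemma adjoint_lipschitz k : 0 <= k -> (forall x, `|A x| <= k * `|x|) ->
  forall l1 l2, `|As l1 - As l2| <= k * `|l1 - l2|.
Proof.
case: ipXV ipYV => ipXC ipXl ipXn [ipYC ipYl _] k0 Ak l1 l2.
set w := As l1 - As l2.
have w2 : `|w| ^+ 2 <= k * `|w| * `|l1 - l2|.
  have -> : `|w| ^+ 2 = ipY (A w) (l1 - l2).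
    by rewrite -ipXn {2}/w (ipBr ipXC ipXl) -!A_adjoint (ipBr ipYC ipYl).
  rewrite (le_trans (ler_norm _)) // (le_trans (ip_norm_le ipYV _ _)) //.
  by apply: ler_wpM2r => //; exact: Ak.
have := normr_ge0 w; have : 0 <= k * `|l1 - l2| by rewrite mulr_ge0.
nra.
Qed.

Lemma Top_lipschitz r : exists M, forall p q,
  `|p| <= r -> `|q| <= r -> `|T p - T q| <= M * `|p - q|.
Proof.
have [k [k0 Ak]] := A_bounded; have [Lc gfL] := gf_lipschitz r.
exists (`|Lc| + k) => -[x l] [y m] pr qr.
have n1 (w : X * Y) : `|w.1| <= `|w| by rewrite prod_normE le_max lexx.
have n2 (w : X * Y) : `|w.2| <= `|w| by rewrite prod_normE le_max lexx orbT.
have xy := n1 ((x, l) - (y, m)); have lm := n2 ((x, l) - (y, m)); rewrite /= in xy lm.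
have gxy := gfL x y (le_trans (n1 (x, l)) pr) (le_trans (n1 (y, m)) qr).
have Lc_le : Lc * `|x - y| <= `|Lc| * `|x - y|.
  by rewrite ler_wpM2r // real_ler_norm // num_real.
have Lc0 := normr_ge0 Lc; have xy0 := normr_ge0 (x - y); have lm0 := normr_ge0 (l - m).
rewrite prod_normE /= ge_max; apply/andP; split.
  rewrite opprD addrACA (le_trans (ler_normD _ _)) //.
  by have := adjoint_lipschitz k0 Ak l m; nra.
rewrite opprB addrC addrA subrK -linearB (le_trans (Ak _)) // (distrC y).
nra.
Qed.

End SaddleOperator.

(** * The trajectory of (AHT) *)

Lemma addrAC_eq0 (V : zmodType) (u w y : V) : u + w + y = 0 -> u + y = - w.
Proof. by move=> h; apply/eqP; rewrite -addr_eq0 addrAC h. Qed.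

Section AHT.
Variables (R : realType) (X Y : normedModType R).
Variables (ipX : X -> X -> R) (ipY : Y -> Y -> R).
Hypotheses (ipXV : is_inner_product ipX) (ipYV : is_inner_product ipY).
Variables (f : X -> R) (gf : X -> X).
Hypothesis f_convex : convex_fun f.
Hypothesis f_grad : forall x, differentiable f x /\ forall h, 'd f x h = ipX (gf x) h.
Hypothesis gf_lipschitz : forall r, exists Lc, forall x y : X,
  `|x| <= r -> `|y| <= r -> `|gf x - gf y| <= Lc * `|x - y|.
Variables (A : {linear X -> Y}) (As : Y -> X) (b : Y).
Hypothesis A_cont : continuous A.
Hypothesis A_adjoint : forall x y, ipY (A x) y = ipX x (As y).
Variables (t0 : R) (eps eps1 eps2 : R -> R).
Hypothesis eps_pos : forall t, t0 <= t -> 0 < eps t.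
Hypothesis eps_deriv : has_deriv_on t0 eps eps1.
Hypothesis eps1_deriv : has_deriv_on t0 eps1 eps2.
Variables (x dx : R -> X) (l dl : R -> Y).
Hypotheses (x_deriv : has_deriv_on t0 x dx) (dx_cont : cont_on t0 dx).
Hypotheses (l_deriv : has_deriv_on t0 l dl) (dl_cont : cont_on t0 dl).
Hypothesis x_ode : forall t, t0 <= t -> dx t + gf (x t) + As (l t) + eps t *: x t = 0.
Hypothesis l_ode : forall t, t0 <= t -> dl t + (b - A (x t)) + eps t *: l t = 0.
Variable tp : R.
Hypothesis t0_le_tp : t0 <= tp.
Hypothesis eps_cond1 : forall t, tp <= t -> 0 <= eps t ^+ 2 + eps1 t.
Hypothesis eps_cond2 : forall t, tp <= t -> 2 * eps t * eps1 t + eps2 t <= 0.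
Variables (xb : X) (lb : Y).
Hypotheses (xb_opt : optsol f A b xb) (lb_mult : multipliers f gf A As b lb).

Local Notation ip2 := (ip_pair ipX ipY).
Local Notation T p := (Top gf A As b p.1 p.2).
Let z t := (x t, l t).
Let dz t := (dx t, dl t).
Let zb := (xb, lb).
Let v t := dz t + eps t *: z t.
Let rho t := \int[lebesgue_measure]_(s in `[t0, t]) eps s.
Let g t := expR (- (2 * rho t)) + eps t ^+ 2.

Lemma aht_velocity t : t0 <= t -> v t = - T (z t).
Proof.
move=> t0t; have := x_ode t0t; rewrite -(addrA (dx t)) => /addrAC_eq0 vx.
have /addrAC_eq0 vl := l_ode t0t.
by rewrite /v /z /dz /=; congr (_, _).
Qed.

Lemma aht_z_deriv : has_deriv_on t0 z dz.
Proof. by move=> t t0t; exact: cvg_pair (x_deriv t0t) (l_deriv t0t). Qed.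

Lemma aht_dz_cont : cont_on t0 dz.
Proof.
apply/subspace_continuousP => t t0t.
move/subspace_continuousP: dx_cont => /(_ t t0t) dxc.
move/subspace_continuousP: dl_cont => /(_ t t0t) dlc.
exact: cvg_pair dxc dlc.
Qed.

Let ip2C := ip_pairC ipXV ipYV.
Let ip2_linear := ip_pair_linear ipXV ipYV.
Let ip2_bounded := ip_pair_bounded ipXV ipYV.
Let ip2_ge0 := ip_pair_ge0 ipXV ipYV.

Lemma aht_velocity_sub s t : t0 <= s -> t0 <= t -> v s - v t = - (T (z s) - T (z t)).
Proof. by move=> t0s t0t; rewrite !aht_velocity // opprB opprK addrC. Qed.

Lemma aht_monotone s t : t0 <= s -> t0 <= t -> ip2 (v s - v t) (z s - z t) <= 0.
Proof.
move=> t0s t0t; rewrite aht_velocity_sub // (ipNl ip2_linear) oppr_le0.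
exact: (Top_monotone ipXV ipYV f_convex f_grad b A_adjoint).
Qed.

Lemma aht_right_lipschitz t : t0 <= t ->
  exists L, \forall s \near t^'+, `|v s - v t| <= L * (s - t).
Proof.
move=> t0t; have zd := has_deriv_on_right aht_z_deriv t0t.
have [M TM] := Top_lipschitz ipXV ipYV b A_adjoint A_cont gf_lipschitz (`|z t| + 1).
exists (`|M| * (`|dz t| + 1)); have zlip := is_right_derive_lipschitz zd.
move/cvgrPdist_le: (is_right_derive_cvg zd) => /(_ 1 ltr01) zc.
near=> s; have ts : t < s by near: s; exact: nbhs_right_gt.
have zts : `|z t - z s| <= 1 by near: s; exact: zc.
have zs : `|z s| <= `|z t| + 1.
  by have := ler_normB (z t) (z t - z s); rewrite opprB addrC subrK; lra.
rewrite aht_velocity_sub ?(le_trans t0t (ltW ts)) // normrN.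
rewrite (le_trans (TM _ _ zs _)) ?lerDl // -mulrA.
rewrite (le_trans (y := `|M| * `|z s - z t|)) ?ler_wpM2r ?real_ler_norm ?num_real //.
by rewrite ler_wpM2l //; near: s; exact: zlip.
Unshelve. all: by end_near. Qed.

Let gap t := lagr ipY f A b (x t) lb - lagr ipY f A b xb (l t).

Lemma aht_gap_le t : t0 <= t -> gap t <= - ip2 (v t) (z t - zb).
Proof.
move=> t0t; rewrite aht_velocity // (ipNl ip2_linear) opprK.
exact: (lagr_gap_le_ip_Top ipXV ipYV f_convex f_grad A_adjoint lb xb_opt (z t)).
Qed.

Lemma aht_gap_ge0 t : 0 <= gap t.
Proof. exact: (lagr_gap_ge0 ipXV ipYV f_convex f_grad A_adjoint xb_opt lb_mult (x t) (l t)). Qed.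

Lemma aht_descent t : t0 <= t -> ip2 (v t) (z t - zb) <= 0.
Proof. by move=> t0t; have := aht_gap_le t0t; have := aht_gap_ge0 t; lra. Qed.

Let a t := expR (2 * rho t).

Lemma aht_exp_rho_derive t : t0 < t -> is_derive t (1 : R) a (2 * eps t * a t).
Proof.
move=> t0t; have rd := is_derive_integral (has_deriv_on_cont eps_deriv) t0t.
have := @is_derive1_comp _ expR (fun s => 2 * rho s) t _ _ (is_derive_expR _) (is_deriveZ 2 rd).
by rewrite mulrC.
Qed.

(* The energy is compared from [t1 > t0] on, where [rho] is differentiable. *)
Let t1 := tp + 1.
Let B := Num.max (ip2 (z t0 - zb) (z t0 - zb)) (ip2 zb zb).
Let W1 := a t1 * (ip2 (dz t1) (dz t1) + eps1 t1 * ip2 (z t1) (z t1)).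
Let C := `|W1| + 4 * B.

Lemma after_t1 (t : R) : t1 <= t -> t0 < t /\ tp <= t.
Proof.
move=> t1t; have tpt : tp <= t by apply: le_trans t1t; rewrite lerDl.
by split => //; apply: le_lt_trans t0_le_tp _; apply: lt_le_trans t1t; rewrite ltrDl.
Qed.

Lemma aht_dist_le t : t0 <= t -> ip2 (z t - zb) (z t - zb) <= B.
Proof.
exact: (dist_bounded ip2C ip2_linear ip2_bounded ip2_ge0 aht_z_deriv eps_pos aht_descent).
Qed.

Lemma aht_B_bounds : 0 <= B /\ 4 * B <= C.
Proof.
split; last by rewrite lerDr.
by apply: le_trans (ip2_ge0 zb) _; rewrite le_max lexx orbT.
Qed.

Lemma aht_norm_le t : t0 <= t -> ip2 (z t) (z t) <= 4 * B.
Proof.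
move=> t0t; have := ip_self_add_le ip2C ip2_linear ip2_ge0 (z t - zb) zb.
rewrite subrK; have := aht_dist_le t0t.
have : ip2 zb zb <= B by rewrite le_max lexx orbT.
lra.
Qed.

Lemma aht_speed_le t : t1 <= t -> ip2 (dz t) (dz t) <= C * g t.
Proof.
move=> t1t; have [t0t tpt] := after_t1 t1t.
have [t0t1 _] := after_t1 (lexx t1).
have a_deriv s : t1 <= s -> is_derive s (1 : R) a (2 * eps s * a s).
  by move=> /after_t1[t0s _]; exact: aht_exp_rho_derive.
have a_ge0 s : 0 <= a s by exact: expR_ge0.
have eps_cond s : t1 <= s -> 2 * eps s * eps1 s + eps2 s <= 0.
  by move=> /after_t1[_ tps]; exact: eps_cond2.
have W := energy_nonincreasing ip2C ip2_linear ip2_bounded ip2_ge0 t0t1 aht_z_deriv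
  aht_dz_cont eps_deriv eps1_deriv a_deriv a_ge0 eps_cond aht_monotone aht_right_lipschitz t1t.
have S_le : ip2 (dz t) (dz t) + eps1 t * ip2 (z t) (z t) <= `|W1| * expR (- (2 * rho t)).
  have ea : expR (- (2 * rho t)) * a t = 1 by rewrite /a -expRD addNr expR0.
  have := ler_wpM2l (expR_ge0 (- (2 * rho t))) W.
  rewrite mulrA ea mul1r => /le_trans; apply.
  by rewrite mulrC ler_wpM2r ?expR_ge0 // real_ler_norm // num_real.
have eps1_le : - eps1 t <= eps t ^+ 2 by rewrite -subr_ge0 opprK; exact: eps_cond1.
have [B0 BC] := aht_B_bounds.
have eps1_term : - eps1 t * ip2 (z t) (z t) <= eps t ^+ 2 * (4 * B).
  rewrite (le_trans (ler_wpM2r (ip2_ge0 _) eps1_le)) // ler_wpM2l ?sqr_ge0 //.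
  exact: aht_norm_le (ltW t0t).
have W1_term : `|W1| * expR (- (2 * rho t)) <= C * expR (- (2 * rho t)).
  by rewrite ler_wpM2r ?expR_ge0 // lerDl mulr_ge0.
have eps_term : eps t ^+ 2 * (4 * B) <= C * eps t ^+ 2 by rewrite mulrC ler_wpM2r ?sqr_ge0.
have := lerD S_le eps1_term; rewrite mulNr addrK => /le_trans; apply.
by rewrite /g mulrDr lerD.
Qed.

Lemma aht_C_ge0 : 0 <= C.
Proof. by have [B0 _] := aht_B_bounds; rewrite addr_ge0 ?mulr_ge0. Qed.

Lemma aht_eps_sq_le t : eps t ^+ 2 * (4 * B) <= C * g t.
Proof.
have [_ BC] := aht_B_bounds.
rewrite (le_trans (ler_wpM2l (sqr_ge0 _) BC)) // mulrC ler_wpM2l ?aht_C_ge0 //.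
by rewrite /g lerDr expR_ge0.
Qed.

Lemma aht_velocity_le t : t1 <= t -> ip2 (v t) (v t) <= 4 * C * g t.
Proof.
move=> t1t; have [t0t _] := after_t1 t1t.
have := ip_self_add_le ip2C ip2_linear ip2_ge0 (dz t) (eps t *: z t).
rewrite (ipZl ip2_linear) (ipZr ip2C ip2_linear) mulrA -expr2.
have : eps t ^+ 2 * ip2 (z t) (z t) <= eps t ^+ 2 * (4 * B).
  by rewrite ler_wpM2l ?sqr_ge0 // aht_norm_le // ltW.
have := aht_speed_le t1t; have := aht_eps_sq_le t.
rewrite /v; lra.
Qed.

Lemma aht_rates :
  [/\ bigO_pinfty (fun t => pnorm2 (dx t + eps t *: (x t - xb)) (dl t + eps t *: (l t - lb))) g,
      bigO_pinfty (fun t => eps t * (lagr ipY f A b (x t) lb - lagr ipY f A b xb (l t))) g &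
      bigO_pinfty (fun t => pnorm2 ((Top gf A As b (x t) (l t)).1 - (Top gf A As b xb lb).1)
             ((Top gf A As b (x t) (l t)).2 - (Top gf A As b xb lb).2)) g].
Proof.
have g0 t : 0 <= g t by rewrite /g addr_ge0 ?expR_ge0 ?sqr_ge0.
have [B0 BC] := aht_B_bounds.
have dist_eps t : t0 <= t -> eps t ^+ 2 * ip2 (z t - zb) (z t - zb) <= C * g t.
  move=> t0t; apply: le_trans (aht_eps_sq_le t).
  by rewrite ler_wpM2l ?sqr_ge0 // (le_trans (aht_dist_le t0t)) //; lra.
split; apply: (@bigO_pinfty_le _ _ _ (4 * C) t1 (fun t _ => g0 t)) => t t1t;
  have [/ltW t0t _] := after_t1 t1t.
- rewrite -(ip_pair_self ipXV ipYV (dz t + eps t *: (z t - zb))) ger0_norm ?ip2_ge0 //.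
  have := ip_self_add_le ip2C ip2_linear ip2_ge0 (dz t) (eps t *: (z t - zb)).
  rewrite (ipZl ip2_linear) (ipZr ip2C ip2_linear) mulrA -expr2.
  by have := aht_speed_le t1t; have := dist_eps t t0t; have := g0 t; have := aht_C_ge0; nra.
- rewrite ger0_norm ?mulr_ge0 ?aht_gap_ge0 ?(ltW (eps_pos t0t)) //.
  have := ip2_ge0 (v t + eps t *: (z t - zb)); rewrite (ip_addZ_self ip2C ip2_linear).
  have : eps t * gap t <= eps t * - ip2 (v t) (z t - zb).
    by rewrite ler_wpM2l ?aht_gap_le // ltW // eps_pos.
  have := aht_velocity_le t1t; have := dist_eps t t0t; have := g0 t; have := aht_C_ge0.
  rewrite /gap; nra.
- have -> : Top gf A As b xb lb = 0.
    exact: (Top_saddle ipXV ipYV f_convex f_grad A_adjoint xb_opt lb_mult).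
  rewrite /= !subr0 -(ip_pair_self ipXV ipYV (Top gf A As b (x t) (l t))).
  have -> : Top gf A As b (x t) (l t) = - v t by rewrite aht_velocity // opprK.
  rewrite (ipNl ip2_linear) (ipNr ip2C ip2_linear) opprK ger0_norm ?ip2_ge0 //.
  exact: aht_velocity_le.
Qed.

End AHT.

Theorem theorem4p1
  (R : realType) (X Y : completeNormedModType R)
  (ipX : X -> X -> R) (ipY : Y -> Y -> R)
  (HipX : is_inner_product ipX) (HipY : is_inner_product ipY)
  (f : X -> R) (gf : X -> X)
  (Hfconv : convex_fun f)
  (Hfdiff : forall x, differentiable f x /\ forall h, 'd f x h = ipX (gf x) h)
  (Hgfcont : continuous gf)
  (Hgflip : forall r : R, exists Lc : R, forall x y : X,
      `|x| <= r -> `|y| <= r -> `|gf x - gf y| <= Lc * `|x - y|)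
  (A : {linear X -> Y}) (HAcont : continuous A)
  (As : Y -> X) (HAs : forall x y, ipY (A x) y = ipX x (As y))
  (b : Y)
  (t0 : R) (Ht0 : 0 <= t0)
  (eps eps1 eps2 : R -> R)
  (Heps_pos : forall t, t0 <= t -> 0 < eps t)
  (Heps_d1 : has_deriv_on t0 eps eps1)
  (Heps_d2 : has_deriv_on t0 eps1 eps2)
  (Heps_c2 : cont_on t0 eps2)
  (Heps_lim : eps @ +oo --> 0)
  (HSM : exists xb lb, optsol f A b xb /\ multipliers f gf A As b lb)
  (x xd : R -> X) (l ld : R -> Y)
  (Hx : has_deriv_on t0 x xd) (Hxd : cont_on t0 xd)
  (Hl : has_deriv_on t0 l ld) (Hld : cont_on t0 ld)
  (HODEx : forall t, t0 <= t -> xd t + gf (x t) + As (l t) + eps t *: x t = 0)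
  (HODEl : forall t, t0 <= t -> ld t + (b - A (x t)) + eps t *: l t = 0)
  (tp : R) (Htp : t0 <= tp)
  (Hcond1 : forall t, tp <= t -> 0 <= eps t ^+ 2 + eps1 t)
  (Hcond2 : forall t, tp <= t -> 2 * eps t * eps1 t + eps2 t <= 0) :
  let rho := fun t => \int[lebesgue_measure]_(s in `[t0, t]) eps s in
  let g := fun t => expR (- (2 * rho t)) + eps t ^+ 2 in
  forall xb lb, optsol f A b xb -> multipliers f gf A As b lb ->
  [/\ bigO_pinfty (fun t => pnorm2 (xd t + eps t *: (x t - xb)) (ld t + eps t *: (l t - lb))) g,
      bigO_pinfty (fun t => eps t * (lagr ipY f A b (x t) lb - lagr ipY f A b xb (l t))) g &
      bigO_pinfty (fun t => pnorm2 ((Top gf A As b (x t) (l t)).1 - (Top gf A As b xb lb).1)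
             ((Top gf A As b (x t) (l t)).2 - (Top gf A As b xb lb).2)) g].
Proof.
move=> rho g xb lb xb_opt lb_mult.
exact: (aht_rates HipX HipY Hfconv Hfdiff Hgflip HAcont HAs Heps_pos Heps_d1 Heps_d2
  Hx Hxd Hl Hld HODEx HODEl Htp Hcond1 Hcond2 xb_opt lb_mult).
Qed.
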